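(* Let $\alpha=(\alpha_1,\dots,\alpha_k)$ be an integer composition of $n>0$ and let $\max(\alpha)$ be its largest part. Then the parabolic Tamari lattice $\mathrm{Tam}(\alpha)$ has order dimension $n-\max(\alpha)$.
   Context: The $\alpha$-regions are the sets $\{\alpha_1+\dots+\alpha_{i-1}+1,\dots,\alpha_1+\dots+\alpha_i\}$, $i\in[k]$, of nodes in $[n]$. An $\alpha$-arc is a pair $w_{a,b}=(a,b)$ with $1\le a<b\le n$ and $a,b$ in different $\alpha$-regions. Let $G_\alpha$ be the directed graph on $\alpha$-arcs with an edge $w_{a_1,b_1}\to w_{a_2,b_2}$ between distinct arcs whenever either $a_1,a_2$ are in the same $\alpha$-region and $a_1\le a_2<b_2\le b_1$, or $a_1,a_2$ are in different $\alpha$-regions, $a_2<a_1<b_2\le b_1$, and $a_1,b_2$ are in different $\alpha$-regions. For a directed graph $G$, a maximal orthogonal pair is a pair $(X,Y)$ of disjoint vertex subsets with no edge from $X$ to $Y$, maximal for this property; ordered by $X\subseteq X'$ they form a lattice $L(G)$. $\mathrm{Tam}(\alpha):=L(G_\alpha)$ (the extremal lattice with Galois graph $G_\alpha$). The order dimension of a poset is the least $d$ such that it embeds as a subposet of $\mathbb R^d$ with the componentwise order. *)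

From Stdlib Require Import Reals.
From mathcomp Require Import all_boot.
Set Implicit Arguments. Unset Strict Implicit. Unset Printing Implicit Defensive.

(* Prefix sums s_j = alpha_1 + ... + alpha_j (s_0 = 0). *)
Definition psum (alpha : seq nat) (j : nat) : nat := sumn (take j alpha).

(* The i-th alpha-region (0-indexed i < k): {s_i + 1, ..., s_{i+1}}. *)
Definition in_region (alpha : seq nat) (i : nat) (a : nat) : bool :=
  (psum alpha i < a) && (a <= psum alpha i.+1).

Definition same_region (alpha : seq nat) (a b : nat) : bool :=
  [exists i : 'I_(size alpha), in_region alpha i a && in_region alpha i b].

Definition is_arc (alpha : seq nat) (n : nat) (p : 'I_n.+1 * 'I_n.+1) : bool :=
  [&& 1 <= p.1, p.1 < p.2 & ~~ same_region alpha p.1 p.2].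

Definition arc (alpha : seq nat) (n : nat) := {p : 'I_n.+1 * 'I_n.+1 | is_arc alpha p}.

Definition Gedge (alpha : seq nat) (n : nat) (w1 w2 : arc alpha n) : bool :=
  let a1 := nat_of_ord (val w1).1 in let b1 := nat_of_ord (val w1).2 in
  let a2 := nat_of_ord (val w2).1 in let b2 := nat_of_ord (val w2).2 in
  (w1 != w2) &&
  ( [&& same_region alpha a1 a2, a1 <= a2, a2 < b2 & b2 <= b1]
  || [&& ~~ same_region alpha a1 a2, a2 < a1, a1 < b2, b2 <= b1
       & ~~ same_region alpha a1 b2]).

Definition orth_pair (T : finType) (e : rel T) (XY : {set T} * {set T}) : bool :=
  [disjoint XY.1 & XY.2] && [forall x in XY.1, forall y in XY.2, ~~ e x y].

Definition max_orth_pair (T : finType) (e : rel T) (XY : {set T} * {set T}) : bool :=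
  orth_pair e XY &&
  [forall XY' : {set T} * {set T},
     (orth_pair e XY' && (XY.1 \subset XY'.1) && (XY.2 \subset XY'.2)) ==> (XY' == XY)].

Definition LG (T : finType) (e : rel T) := {XY : {set T} * {set T} | max_orth_pair e XY}.

Definition LG_le (T : finType) (e : rel T) : rel (LG e) :=
  fun u v => (val u).1 \subset (val v).1.

Definition Tam (alpha : seq nat) (n : nat) := LG (@Gedge alpha n).
Definition Tam_le (alpha : seq nat) (n : nat) : rel (Tam alpha n) := @LG_le _ (@Gedge alpha n).

Definition embeds_in_Rd (P : Type) (le : rel P) (d : nat) : Prop :=
  exists f : P -> 'I_d -> R,
    forall x y, le x y <-> (forall i, Rle (f x i) (f y i)).

Definition order_dimension_is (P : Type) (le : rel P) (d : nat) : Prop :=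
  embeds_in_Rd le d /\ (forall d', embeds_in_Rd le d' -> d <= d').

Definition max_part (alpha : seq nat) : nat := \max_(a <- alpha) a.

(* Upper bound: fix a largest part, occupying the nodes s+1..s+L.  Arcs with a
   common source form a chain along which the X-part of a maximal orthogonal pair
   is down-closed, and arcs with a common target form a chain along which the
   Y-part is up-closed, so on each chain these parts are determined by their sizes.
   Two elements of Tam(alpha) are therefore compared by the number of arcs of X with
   each source <= s and the number of arcs of Y with each target > s+L: by
   maximality of (X_v,Y_v), an arc of X_u missing from X_v and starting after s
   lies in, or has an edge to, an arc of Y_v, which then ends after s+L.  This
   gives n - L real coordinates.
   Lower bound: G_alpha has n - L pairwise non-adjacent arcs, obtained by scanning
   the regions from right to left and matching the first min(alpha_j, largest later
   part) nodes of region j with the smallest still unused ends.  An independent set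
   of size m in a graph G yields a standard example S_m inside L(G), and S_m has
   dimension m. *)

From Pilot Require Import Defs.
From Stdlib Require Import Reals Lra Classical.
From mathcomp Require Import all_boot zify.
Set Implicit Arguments. Unset Strict Implicit. Unset Printing Implicit Defensive.

Section MaximalOrthogonalPairs.

Variables (T : finType) (e : rel T).
Implicit Types (p q : {set T} * {set T}) (x y z : T).

Lemma orth_pairP p :
  reflect ((forall x, x \in p.1 -> x \notin p.2) /\
           (forall x y, x \in p.1 -> y \in p.2 -> ~~ e x y))
          (orth_pair e p).
Proof.
apply: (iffP andP) => [[dis /forall_inP noedge] | [dis noedge]]; split.
- by move=> x x1; move: dis; rewrite disjoint_subset => /subsetP /(_ x x1).
- by move=> x y /noedge /forall_inP; apply.
- by rewrite disjoint_subset; apply/subsetP => x /dis.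
- by apply/forall_inP => x /noedge noedge_x; apply/forall_inP.
Qed.

Lemma orth_pair_disj p x : orth_pair e p -> x \in p.1 -> x \notin p.2.
Proof. by case/orth_pairP => dis _; apply: dis. Qed.

Lemma orth_pair_noedge p x y :
  orth_pair e p -> x \in p.1 -> y \in p.2 -> ~~ e x y.
Proof. by case/orth_pairP => _; apply. Qed.

Lemma max_orth_pair_orth p : max_orth_pair e p -> orth_pair e p.
Proof. by case/andP. Qed.

Lemma max_orth_pair_eq p q : max_orth_pair e p -> orth_pair e q ->
  p.1 \subset q.1 -> p.2 \subset q.2 -> q = p.
Proof.
case/andP => _ /forallP /(_ q) maxp orth_q sub1 sub2.
by apply/eqP; move: maxp; rewrite orth_q sub1 sub2.
Qed.

Lemma max_orth_pair_add1 p x : max_orth_pair e p -> x \notin p.2 ->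
  (forall y, y \in p.2 -> ~~ e x y) -> x \in p.1.
Proof.
move=> maxp xNY noedge_x; have orth_p := max_orth_pair_orth maxp.
have orth_xp : orth_pair e (x |: p.1, p.2).
  apply/orth_pairP; split=> [z | z y] /setU1P [-> | zX] //=;
    [exact: orth_pair_disj zX | exact: noedge_x | exact: orth_pair_noedge].
have := max_orth_pair_eq maxp orth_xp (subsetUr _ _) (subxx _).
by case: p {maxp xNY noedge_x orth_p orth_xp} => X Y [] <-; rewrite setU11.
Qed.

Lemma max_orth_pair_add2 p y : max_orth_pair e p -> y \notin p.1 ->
  (forall x, x \in p.1 -> ~~ e x y) -> y \in p.2.
Proof.
move=> maxp yNX noedge_y; have orth_p := max_orth_pair_orth maxp.
have orth_py : orth_pair e (p.1, y |: p.2).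
  apply/orth_pairP; split=> [z zX | z w zX] /=; rewrite in_setU1.
    by rewrite negb_or orth_pair_disj // andbT; apply: contraNneq yNX => <-.
  by case/orP=> [/eqP -> | wY]; [exact: noedge_y | exact: orth_pair_noedge orth_p zX wY].
have := max_orth_pair_eq maxp orth_py (subxx _) (subsetUr _ _).
by case: p {maxp yNX noedge_y orth_p orth_py} => X Y [] <-; rewrite setU11.
Qed.

Lemma max_orth_pair_succ1 p x z : max_orth_pair e p -> x \in p.1 -> e x z ->
  (forall y, e z y -> e x y) -> z \in p.1.
Proof.
move=> maxp xX exz ext; have orth_p := max_orth_pair_orth maxp.
apply: max_orth_pair_add1 => // [| y yY].
  by apply: contraL exz => zY; exact: orth_pair_noedge orth_p xX zY.
by apply: contraNN (orth_pair_noedge orth_p xX yY); apply: ext.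
Qed.

Lemma max_orth_pair_pred2 p y z : max_orth_pair e p -> y \in p.2 -> e z y ->
  (forall x, e x z -> e x y) -> z \in p.2.
Proof.
move=> maxp yY ezy ext; have orth_p := max_orth_pair_orth maxp.
apply: max_orth_pair_add2 => // [| x xX].
  by apply: contraL ezy => zX; exact: orth_pair_noedge orth_p zX yY.
by apply: contraNN (orth_pair_noedge orth_p xX yY); apply: ext.
Qed.

Lemma max_orth_pair_notin1 p x : max_orth_pair e p -> x \notin p.1 ->
  exists2 y, y \in p.2 & (y == x) || e x y.
Proof.
move=> maxp xNX; apply/exists_inP; apply: contraNT xNX.
rewrite negb_exists_in => /forall_inP noedge.
apply: max_orth_pair_add1 => // [| y /noedge]; first by apply/negP => /noedge; rewrite eqxx.
by rewrite negb_or => /andP [].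
Qed.

Lemma max_orth_pair_anti p q : max_orth_pair e p -> max_orth_pair e q ->
  p.1 \subset q.1 -> q.2 \subset p.2.
Proof.
move=> maxp maxq /subsetP sub1; have orth_q := max_orth_pair_orth maxq.
apply/subsetP => y yY; apply: max_orth_pair_add2 => // [| x /sub1 xX].
  by apply: contraL yY => /sub1; exact: orth_pair_disj.
exact: orth_pair_noedge orth_q xX yY.
Qed.

Lemma orth_pair_extend p : orth_pair e p ->
  exists u : LG e, p.1 \subset (val u).1 /\ p.2 \subset (val u).2.
Proof.
move=> orth_p.
pose P q := [&& orth_pair e q, p.1 \subset q.1 & p.2 \subset q.2].
have Pp : P p by rewrite /P orth_p !subxx.
case: (arg_maxnP (fun q => #|q.1| + #|q.2|) Pp) => q /and3P [orth_q sub1 sub2] qmax.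
suff maxq : max_orth_pair e q by exists (exist _ q maxq).
apply/andP; split=> //; apply/forall_inP => r /andP [/andP [orth_r subq1] subq2].
have /qmax : P r by rewrite /P orth_r (subset_trans sub1) ?(subset_trans sub2).
move: (subset_leq_card subq1) (subset_leq_card subq2) => le1 le2 le12.
have eq1 : r.1 = q.1 by apply/esym/eqP; rewrite eqEcard subq1 /=; lia.
have eq2 : r.2 = q.2 by apply/esym/eqP; rewrite eqEcard subq2 /=; lia.
by rewrite [r]surjective_pairing eq1 eq2 -surjective_pairing.
Qed.

End MaximalOrthogonalPairs.

Lemma standard_example_le_dim (P : Type) (le : rel P) d (K : finType) (a b : K -> P) :
  embeds_in_Rd le d -> (forall i j, i != j -> le (a j) (b i)) ->
  (forall i, ~~ le (a i) (b i)) -> #|K| <= d.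
Proof.
case=> f f_emb ab_le ab_nle.
have witness i : exists c : 'I_d, Rlt (f (b i) c) (f (a i) c).
  apply: not_all_not_ex => all_ge; move/negP: (ab_nle i); apply; apply/f_emb => c.
  exact: Rnot_lt_le (all_ge c).
have [g g_lt] := fin_all_exists witness.
have g_inj : injective g.
  move=> i j gij; apply/eqP/negPn/negP => nij.
  have nji : j != i by rewrite eq_sym.
  have := proj1 (f_emb _ _) (ab_le _ _ nij) (g i).
  have := proj1 (f_emb _ _) (ab_le _ _ nji) (g j).
  move: (g_lt i) (g_lt j); rewrite gij; lra.
by have := leq_card g g_inj; rewrite card_ord.
Qed.

Lemma embeds_in_Rd_nat (P : Type) (le : rel P) d (g : P -> 'I_d -> nat) (up : pred 'I_d) :
  (forall x y, le x y <-> forall i, if up i then g x i <= g y i else g y i <= g x i) ->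
  embeds_in_Rd le d.
Proof.
move=> g_emb; exists (fun x i => if up i then INR (g x i) else Ropp (INR (g x i))) => x y.
rewrite g_emb; split=> le_xy i; move: (le_xy i); case: (up i) => H.
- by apply/le_INR/leP.
- by apply/Ropp_le_contravar/le_INR/leP.
- by apply/leP/INR_le.
- by apply/leP/INR_le/Ropp_le_cancel.
Qed.

Lemma LG_indep_le_dim (T : finType) (e : rel T) (K : finType) (x : K -> T) d :
  injective x -> (forall i j, i != j -> ~~ e (x i) (x j)) ->
  embeds_in_Rd (@LG_le T e) d -> #|K| <= d.
Proof.
move=> x_inj indep emb.
have top i : orth_pair e ([set x i], x @: [set j | j != i]).
  apply/orth_pairP; split=> [z | z y] /set1P -> /=.
    by apply/imsetP => [[j]]; rewrite inE => nji /x_inj eij; move: nji; rewrite eij eqxx.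
  by case/imsetP => j; rewrite inE => nji ->; apply: indep; rewrite eq_sym.
have bot i : orth_pair e ([set z | (z != x i) && ~~ e z (x i)], [set x i]).
  by apply/orth_pairP; split=> [z | z y]; rewrite !inE => /andP [nzx nezx] // /eqP ->.
have [a a_top] := fin_all_exists (fun i => orth_pair_extend (top i)).
have [b b_bot] := fin_all_exists (fun i => orth_pair_extend (bot i)).
apply: (standard_example_le_dim (a := a) (b := b) emb).
- move=> i j nij; apply/subsetP => z z_aj.
  have [_ sub2] := a_top j; have [sub1 _] := b_bot i.
  have orth_aj := max_orth_pair_orth (valP (a j)).
  have xi_aj : x i \in (val (a j)).2.
    by apply: (subsetP sub2); apply/imsetP; exists i; rewrite ?inE.
  apply: (subsetP sub1); rewrite inE (orth_pair_noedge orth_aj z_aj xi_aj) andbT.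
  by apply: contraTneq xi_aj => <-; apply: orth_pair_disj orth_aj z_aj.
- move=> i; apply/negP => /subsetP sub.
  have [sub1 _] := a_top i; have [_ sub2] := b_bot i.
  have := orth_pair_disj (max_orth_pair_orth (valP (b i))) (sub _ (subsetP sub1 _ (set11 _))).
  by rewrite (subsetP sub2 _ (set11 _)).
Qed.

Lemma chain_card_subset (T : finType) (R : rel T) (F A B : {set T}) :
  {in F &, forall u v, u != v -> R u v || R v u} ->
  {in A :&: F & F, forall u v, R u v -> v \in A} ->
  {in B :&: F & F, forall u v, R u v -> v \in B} ->
  #|A :&: F| <= #|B :&: F| -> A :&: F \subset B :&: F.
Proof.
move=> total upA upB card_le; apply/subsetP => u uAF; apply/negPn/negP => uNBF.
have uF : u \in F by case/setIP: uAF.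
have uNB : u \notin B by apply: contra uNBF => uB; rewrite inE uB.
have : B :&: F \proper A :&: F.
  rewrite properE; apply/andP; split; last by apply/subsetPn; exists u.
  apply/subsetP => v vBF; have vF : v \in F by case/setIP: vBF.
  rewrite inE vF andbT.
  have nuv : u != v by apply: contraNneq uNB => ->; case/setIP: vBF.
  case/orP: (total u v uF vF nuv) => [/(upA u v uAF vF) // | Rvu].
  by rewrite (upB v u vBF uF Rvu) in uNB.
by move/proper_card; rewrite ltnNge card_le.
Qed.

(* 0-indexed, as in [in_region]; junk outside [1, sumn alpha]. *)
Fixpoint region (alpha : seq nat) (a : nat) : nat :=
  if alpha is x :: alpha' then if a <= x then 0 else (region alpha' (a - x)).+1
  else 0.

Lemma psumS alpha j : psum alpha j.+1 = psum alpha j + nth 0 alpha j.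
Proof.
rewrite /psum; case: (ltnP j (size alpha)) => [j_lt | j_ge].
  by rewrite (take_nth 0 j_lt) sumn_rcons.
by rewrite !take_oversize ?nth_default ?addn0 // (leq_trans j_ge).
Qed.

Lemma psum_le alpha j : psum alpha j <= sumn alpha.
Proof. by rewrite /psum -{2}(cat_take_drop j alpha) sumn_cat leq_addr. Qed.

Lemma region_lt alpha a j : 0 < a <= sumn alpha ->
  (region alpha a < j) = (a <= psum alpha j).
Proof.
elim: alpha a j => [|x alpha IH] a j /= /andP [a_gt0 a_le]; first by lia.
case: j => [|j]; first by rewrite /psum take0 /=; lia.
rewrite /psum /= -/(psum alpha j); case: (leqP a x) => [a_le_x | x_lt_a]; first by lia.
by rewrite ltnS IH; [lia | apply/andP; lia].
Qed.

Lemma region_mono alpha : {homo region alpha : a b / a <= b}.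
Proof.
elim: alpha => [|x alpha IH] a b //= a_le_b.
case: (leqP a x) => // x_lt_a; rewrite (leqNgt b x) (leq_trans x_lt_a a_le_b) ltnS.
exact/IH/leq_sub2r.
Qed.

Lemma lt_of_region_lt alpha a b : region alpha a < region alpha b -> a < b.
Proof. by apply: contraTltn => /(region_mono alpha); rewrite leqNgt. Qed.

Lemma region_psum alpha j a : psum alpha j < a <= psum alpha j.+1 -> region alpha a = j.
Proof.
move=> /andP [lt_a a_le]; have a_range : 0 < a <= sumn alpha.
  by rewrite (leq_ltn_trans _ lt_a) ?(leq_trans a_le (psum_le _ _)).
apply/eqP; rewrite eqn_leq -ltnS region_lt // a_le leqNgt region_lt //; lia.
Qed.

Lemma region_gt_psum alpha j a : psum alpha j.+1 < a <= sumn alpha -> j < region alpha a.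
Proof.
move=> /andP [lt_a a_le]; rewrite ltnNge -ltnS region_lt; first by rewrite -ltnNge.
by rewrite a_le andbT (leq_ltn_trans _ lt_a).
Qed.

Lemma same_regionE alpha a b : 0 < a <= sumn alpha -> 0 < b <= sumn alpha ->
  same_region alpha a b = (region alpha a == region alpha b).
Proof.
move=> a_range b_range; have in_regionE i c : 0 < c <= sumn alpha ->
    in_region alpha i c = (region alpha c == i).
  by move=> c_range; rewrite /in_region ltnNge -!region_lt // -leqNgt ltnS eqn_leq andbC.
apply/existsP/eqP => [[i] | eq_ab].
  by rewrite !in_regionE // => /andP [/eqP -> /eqP ->].
have lt_size : region alpha a < size alpha.
  by rewrite region_lt // /psum take_size; case/andP: a_range.
by exists (Ordinal lt_size); rewrite !in_regionE //= eq_ab eqxx.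
Qed.

Lemma max_part_cons x alpha : max_part (x :: alpha) = maxn x (max_part alpha).
Proof. by rewrite /max_part big_cons. Qed.

Lemma max_part_mem alpha : alpha != [::] -> max_part alpha \in alpha.
Proof.
elim: alpha => [|x alpha IH] // _; rewrite max_part_cons inE.
case: (eqVneq alpha [::]) => [-> | /IH mem]; first by rewrite /max_part big_nil maxn0 eqxx.
by case: (leqP (max_part alpha) x); rewrite ?eqxx ?mem ?orbT.
Qed.

(* Endpoints of two arcs of G_alpha, neither adjacent to the other (see [Gedge_indep]). *)
Definition indep_pair (r : nat -> nat) (p q : nat * nat) : bool :=
  (p.1 < q.1) &&
  (if r p.1 == r q.1 then p.2 < q.2 else [|| p.2 <= q.1, q.2 < p.2 | r p.2 == r q.1]).

(* [b] may end a new arc starting left of all of [S] without creating an edge. *)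
Definition free_end (r : nat -> nat) (S : seq (nat * nat)) (b : nat) : bool :=
  all (fun q => [|| b <= q.1, q.2 < b | r b == r q.1]) S.

Definition matching_inv (r : nat -> nat) (p n : nat) (S : seq (nat * nat)) (A : seq nat) :=
  [/\ pairwise (indep_pair r) S,
      all (fun q => [&& p < q.1, q.1 < q.2, q.2 <= n & r q.1 != r q.2]) S,
      sorted ltn A, all (fun b => p < b <= n) A & all (free_end r S) A].

(* The first [t] nodes after [p0], matched with the [t] smallest free ends [A]. *)
Definition block_arcs (p0 t : nat) (A : seq nat) : seq (nat * nat) :=
  [seq (p0 + i.+1, nth 0 A i) | i <- iota 0 t].

Section MatchingStep.

Variables (r : nat -> nat) (p0 p n t : nat) (S : seq (nat * nat)) (A : seq nat).
Hypotheses (le_p0p : p0 <= p) (le_pn : p <= n) (t_le_block : t <= p - p0) (t_le_A : t <= size A).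
Hypothesis block_const : forall a b, p0 < a <= p -> p0 < b <= p -> r a = r b.
Hypothesis block_lt : forall a b, p0 < a <= p -> p < b <= n -> r a < r b.
Hypothesis inv : matching_inv r p n S A.

Lemma mem_block_arcs q : q \in block_arcs p0 t A ->
  exists2 i, i < t & q = (p0 + i.+1, nth 0 A i).
Proof. by case/mapP => i; rewrite mem_iota => /andP [_ lt_it] ->; exists i. Qed.

Lemma block_start_range i : i < t -> p0 < p0 + i.+1 <= p.
Proof. by move=> lt_it; apply/andP; split; lia. Qed.

Lemma matching_nth i : i < size A -> p < nth 0 A i <= n.
Proof. by case: inv => _ _ _ /allP range _ /(mem_nth 0) /range. Qed.

Lemma matching_nth_lt i j : i < j -> j < size A -> nth 0 A i < nth 0 A j.
Proof.
case: inv => _ _ sorted_A _ _ lt_ij lt_j.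
by apply: (sorted_ltn_nth ltn_trans) => //; rewrite inE (ltn_trans lt_ij).
Qed.

Lemma matching_mem_drop b : b \in drop t A ->
  exists2 j, t <= j < size A & b = nth 0 A j.
Proof.
case/(nthP 0) => k; rewrite size_drop nth_drop => lt_k <-.
by exists (t + k); rewrite // leq_addr /= -ltn_subRL.
Qed.

Lemma matching_step_pairwise : pairwise (indep_pair r) (block_arcs p0 t A ++ S).
Proof.
case: inv => indep_S /allP valid_S _ _ /allP free_A; rewrite pairwise_cat indep_S andbT.
apply/andP; split.
  apply/allrelP => _ q /mem_block_arcs [i lt_it ->] qS.
  have /and4P [lt_pq lt_q le_qn _] := valid_S q qS.
  have lt_ia : i < size A := leq_trans lt_it t_le_A.
  have /andP [_ le_ap] := block_start_range lt_it.
  have lt_reg : r (p0 + i.+1) < r q.1.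
    by apply: block_lt; rewrite ?block_start_range ?lt_pq ?(leq_trans (ltnW lt_q)).
  rewrite /indep_pair /= (ltn_eqF lt_reg) (leq_ltn_trans le_ap lt_pq).
  by have /allP := free_A _ (mem_nth 0 lt_ia); apply.
apply/(pairwiseP (0, 0)) => i j; rewrite size_map size_iota => lt_it lt_jt lt_ij.
rewrite !(nth_map 0) ?size_iota // !nth_iota // /indep_pair /= !add0n ltn_add2l ltnS lt_ij.
rewrite (block_const (block_start_range lt_it) (block_start_range lt_jt)) eqxx.
exact: matching_nth_lt lt_ij (leq_trans lt_jt t_le_A).
Qed.

Lemma matching_step_valid : all (fun q => [&& p0 < q.1, q.1 < q.2, q.2 <= n & r q.1 != r q.2])
  (block_arcs p0 t A ++ S).
Proof.
case: inv => _ /allP valid_S _ _ _; apply/allP => q; rewrite mem_cat.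
case/orP=> [/mem_block_arcs [i lt_it ->] | qS] /=; last first.
  by have /and4P [lt_pq -> -> ->] := valid_S q qS; rewrite (leq_ltn_trans le_p0p lt_pq).
have lt_ia := leq_trans lt_it t_le_A.
have /andP [lt_pa le_an] := matching_nth lt_ia.
have /andP [gt_a le_ap] := block_start_range lt_it.
have lt_reg := block_lt (block_start_range lt_it) (matching_nth lt_ia).
by rewrite gt_a le_an neq_ltn lt_reg (leq_ltn_trans le_ap lt_pa).
Qed.

Lemma matching_step_sorted : sorted ltn (iota p0.+1 (p - p0) ++ drop t A).
Proof.
case: inv => _ _ sorted_A /allP range_A _.
rewrite (sorted_pairwise ltn_trans) pairwise_cat -!(sorted_pairwise ltn_trans).
apply/and3P; split; [| exact: iota_ltn_sorted | exact: drop_sorted].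
apply/allrelP => a b; rewrite mem_iota => le_a /matching_mem_drop [j /andP [_ lt_j] ->].
by have := matching_nth lt_j; lia.
Qed.

Lemma matching_step_range : all (fun b => p0 < b <= n) (iota p0.+1 (p - p0) ++ drop t A).
Proof.
case: inv => _ _ _ /allP range_A _; apply/allP => b; rewrite mem_cat mem_iota.
by case/orP=> [| /mem_drop /range_A]; lia.
Qed.

Lemma matching_step_free :
  all (free_end r (block_arcs p0 t A ++ S)) (iota p0.+1 (p - p0) ++ drop t A).
Proof.
case: inv => _ /allP valid_S _ _ /allP free_A.
apply/allP => b; rewrite /free_end all_cat mem_cat => /orP [| b_drop].
  rewrite mem_iota => b_block; have b_range : p0 < b <= p by lia.
  apply/andP; split; apply/allP.
    move=> _ /mem_block_arcs [i lt_it ->] /=.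
    by rewrite (block_const b_range (block_start_range lt_it)) eqxx !orbT.
  move=> q qS; have /and4P [lt_pq _ _ _] := valid_S q qS; case/andP: b_range => _ le_bp.
  by rewrite (leq_trans le_bp (ltnW lt_pq)).
apply/andP; split; last exact: free_A (mem_drop b_drop).
have [j /andP [le_tj lt_j] ->] := matching_mem_drop b_drop.
apply/allP => _ /mem_block_arcs [i lt_it ->] /=.
by rewrite matching_nth_lt ?orbT // (leq_trans lt_it le_tj).
Qed.

Lemma matching_step :
  matching_inv r p0 n (block_arcs p0 t A ++ S) (iota p0.+1 (p - p0) ++ drop t A).
Proof.
split; [exact: matching_step_pairwise | exact: matching_step_valid | exact: matching_step_sorted
       | exact: matching_step_range | exact: matching_step_free].
Qed.

End MatchingStep.

Section ParabolicTamari.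

Variables (alpha : seq nat) (n : nat).
Hypothesis sum_alpha : sumn alpha = n.
Local Notation arc := (Defs.arc alpha n).
Local Notation reg := (region alpha).
Implicit Types x y z : arc.

Definition src x : nat := (val x).1.
Definition tgt x : nat := (val x).2.

Lemma arc_bounds x : [/\ 0 < src x, src x < tgt x & tgt x <= n].
Proof.
case: x => [[a b] ab]; rewrite /src /tgt /=; case/and3P: ab => a_gt0 a_lt_b _.
by split=> //; rewrite -ltnS.
Qed.

Lemma src_lt_tgt x : src x < tgt x.
Proof. by case: (arc_bounds x). Qed.

Lemma src_range x : 0 < src x <= sumn alpha.
Proof. by case: (arc_bounds x) => -> lt le; rewrite sum_alpha ltnW ?(leq_trans lt). Qed.

Lemma tgt_range x : 0 < tgt x <= sumn alpha.
Proof. by case: (arc_bounds x) => gt0 lt le; rewrite sum_alpha le (ltn_trans gt0 lt). Qed.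

Lemma arc_region_lt x : reg (src x) < reg (tgt x).
Proof.
have /and3P [_ _] := valP x; rewrite same_regionE ?src_range ?tgt_range //.
by rewrite ltn_neqAle => -> /=; rewrite region_mono // ltnW ?src_lt_tgt.
Qed.

Lemma arc_inj x y : src x = src y -> tgt x = tgt y -> x = y.
Proof.
case: x y => [[a b] ?] [[c d] ?]; rewrite /src /tgt /= => eq_ac eq_bd.
by apply: val_inj; congr pair; apply: val_inj.
Qed.

Lemma GedgeE x y : Gedge x y = (x != y) &&
  (if reg (src x) == reg (src y) then (src x <= src y) && (tgt y <= tgt x)
   else [&& src y < src x, src x < tgt y, tgt y <= tgt x & reg (src x) != reg (tgt y)]).
Proof.
rewrite /Gedge -/(src x) -/(src y) -/(tgt x) -/(tgt y).
rewrite !same_regionE ?src_range ?tgt_range //.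
by case: (eqVneq (reg (src x)) (reg (src y))) => [-> | _] /=; rewrite ?src_lt_tgt /= ?orbF.
Qed.

Lemma Gedge_region_lt x y : Gedge x y -> reg (src x) < reg (tgt y).
Proof.
rewrite GedgeE => /andP [_]; case: eqP => [-> _ | /eqP ne /and4P [_ lt _ ne']].
  exact: arc_region_lt.
by rewrite ltn_neqAle ne' region_mono // ltnW.
Qed.

Lemma Gedge_src x z : src z = src x -> tgt z < tgt x -> Gedge x z.
Proof.
move=> eq_s lt_t; rewrite GedgeE eq_s eqxx leqnn ltnW // !andbT.
by apply: contraTneq lt_t => ->; rewrite ltnn.
Qed.

Lemma Gedge_src_trans x z y : src z = src x -> tgt z < tgt x -> Gedge z y -> Gedge x y.
Proof.
move=> eq_s lt_t; rewrite !GedgeE eq_s => /andP [_].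
case: (eqVneq (reg (src x)) (reg (src y))) => [_ /andP [le_s le_t] | _ /and4P [lt_s -> le_t ->]].
  rewrite le_s (leq_trans le_t (ltnW lt_t)) !andbT.
  by apply: contraTneq le_t => <-; rewrite -ltnNge.
rewrite lt_s (leq_trans le_t (ltnW lt_t)) !andbT.
by apply: contraTneq lt_s => <-; rewrite ltnn.
Qed.

Definition ahead z y : bool :=
  if reg (src z) == reg (src y) then src z < src y else src y < src z.

Lemma ahead_total z y : tgt z = tgt y -> z != y -> ahead z y || ahead y z.
Proof.
move=> eq_t nzy; have : src z != src y.
  by apply: contraNneq nzy => eq_s; apply/eqP; apply: arc_inj eq_s eq_t.
by rewrite neq_ltn /ahead [reg (src y) == _]eq_sym; case: eqP => _ //; rewrite orbC.
Qed.

Lemma Gedge_tgt z y : tgt z = tgt y -> ahead z y -> Gedge z y.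
Proof.
rewrite /ahead GedgeE => <-; case: (eqVneq (reg (src z)) (reg (src y))) => _ lt_s.
  by rewrite (ltnW lt_s) leqnn !andbT; apply: contraTneq lt_s => ->; rewrite ltnn.
rewrite lt_s src_lt_tgt leqnn neq_ltn arc_region_lt !andbT.
by apply: contraTneq lt_s => ->; rewrite ltnn.
Qed.

Lemma Gedge_tgt_trans x z y : tgt z = tgt y -> ahead z y -> Gedge x z -> Gedge x y.
Proof.
rewrite /ahead !GedgeE => <- ahead_zy /andP [_ exz].
have reg_y_le_z : reg (src y) <= reg (src z).
  by case: eqP ahead_zy => [-> // | _ /ltnW /(region_mono alpha)].
have neq_xy : src y != src x -> x != y by apply: contraNneq => ->.
case: (eqVneq (reg (src x)) (reg (src z))) exz =>
  [eq_xz /andP [le_xz le_t] | ne_xz /and4P [lt_zx lt_xt le_t ne_xt]].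
- case: (eqVneq (reg (src z)) (reg (src y))) ahead_zy => [eq_zy lt_zy | ne_zy _].
    have lt_xy := leq_ltn_trans le_xz lt_zy.
    by rewrite eq_xz eq_zy eqxx (ltnW lt_xy) le_t andbT neq_xy ?gtn_eqF.
  have lt_reg : reg (src y) < reg (src x) by rewrite eq_xz ltn_neqAle eq_sym ne_zy.
  rewrite (gtn_eqF lt_reg) (lt_of_region_lt lt_reg) (leq_ltn_trans le_xz (src_lt_tgt z)).
  by rewrite le_t eq_xz neq_ltn arc_region_lt andbT neq_xy ?ltn_eqF ?(lt_of_region_lt lt_reg).
have lt_reg : reg (src y) < reg (src x).
  by rewrite (leq_ltn_trans reg_y_le_z) // ltn_neqAle eq_sym ne_xz region_mono // ltnW.
rewrite (gtn_eqF lt_reg) (lt_of_region_lt lt_reg) lt_xt le_t ne_xt andbT.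
by rewrite neq_xy ?ltn_eqF ?(lt_of_region_lt lt_reg).
Qed.

Implicit Types u v : Tam alpha n.

Definition start_count u c : nat := #|(val u).1 :&: [set x | src x == c]|.
Definition end_count u c : nat := #|(val u).2 :&: [set y | tgt y == c]|.

Lemma Tam_start_closed u x z :
  x \in (val u).1 -> src z = src x -> tgt z < tgt x -> z \in (val u).1.
Proof.
move=> xX eq_s lt_t; apply: (max_orth_pair_succ1 (valP u) xX (Gedge_src eq_s lt_t)).
by move=> y; apply: Gedge_src_trans.
Qed.

Lemma Tam_end_closed u y z :
  y \in (val u).2 -> tgt z = tgt y -> ahead z y -> z \in (val u).2.
Proof.
move=> yY eq_t ahead_zy; apply: (max_orth_pair_pred2 (valP u) yY (Gedge_tgt eq_t ahead_zy)).
by move=> x; apply: Gedge_tgt_trans.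
Qed.

Lemma start_count_subset u v x : start_count u (src x) <= start_count v (src x) ->
  x \in (val u).1 -> x \in (val v).1.
Proof.
move=> le_count xX; pose F := [set z | src z == src x].
have closed (w : Tam alpha n) :
    {in (val w).1 :&: F & F, forall a b, tgt b < tgt a -> b \in (val w).1}.
  move=> a b /setIP [aX]; rewrite !inE => /eqP sa /eqP sb lt_t.
  by apply: Tam_start_closed aX _ lt_t; rewrite sa sb.
have total : {in F &, forall a b, a != b -> (tgt b < tgt a) || (tgt a < tgt b)}.
  move=> a b; rewrite !inE => /eqP sa /eqP sb nab; rewrite -neq_ltn.
  by apply: contraNneq nab => tab; apply/eqP/arc_inj; rewrite ?sa ?sb.
have /subsetP sub := chain_card_subset total (closed u) (closed v) le_count.
by have /sub /setIP [] : x \in (val u).1 :&: F by rewrite !inE xX eqxx.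
Qed.

Lemma end_count_subset u v y : end_count v (tgt y) <= end_count u (tgt y) ->
  y \in (val v).2 -> y \in (val u).2.
Proof.
move=> le_count yY; pose F := [set z | tgt z == tgt y].
have closed (w : Tam alpha n) :
    {in (val w).2 :&: F & F, forall a b, ahead b a -> b \in (val w).2}.
  move=> a b /setIP [aY]; rewrite !inE => /eqP ta /eqP tb ahead_ba.
  by apply: Tam_end_closed aY _ ahead_ba; rewrite ta tb.
have total : {in F &, forall a b, a != b -> ahead b a || ahead a b}.
  move=> a b; rewrite !inE => /eqP ta /eqP tb nab; rewrite orbC.
  by apply: ahead_total nab; rewrite ta tb.
have /subsetP sub := chain_card_subset total (closed v) (closed u) le_count.
by have /sub /setIP [] : y \in (val v).2 :&: F by rewrite !inE yY eqxx.
Qed.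

Lemma Tam_le_counts m u v : Tam_le u v <->
  (forall c, 0 < c <= psum alpha m -> start_count u c <= start_count v c) /\
  (forall c, psum alpha m.+1 < c <= n -> end_count v c <= end_count u c).
Proof.
split=> [le_uv | [le_start le_end]].
  split=> c _; apply/subset_leq_card/setSI; first exact: le_uv.
  exact: max_orth_pair_anti (valP u) (valP v) le_uv.
apply/subsetP => x xXu; apply/negPn/negP => xNXv.
have [a_gt0 _ _] := arc_bounds x.
case: (leqP (src x) (psum alpha m)) => [le_s | lt_s].
  have c_range : 0 < src x <= psum alpha m by rewrite a_gt0 le_s.
  by rewrite (start_count_subset (le_start _ c_range) xXu) in xNXv.
have [y yYv y_x] := max_orth_pair_notin1 (valP v) xNXv.
have m_le : m <= reg (src x) by rewrite leqNgt region_lt ?src_range // -ltnNge.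
have lt_m : m < reg (tgt y).
  apply: leq_ltn_trans m_le _; case/orP: y_x => [/eqP -> | /Gedge_region_lt //].
  exact: arc_region_lt.
have yYu : y \in (val u).2.
  apply: end_count_subset yYv; apply: le_end; have [_ _ ->] := arc_bounds y.
  by rewrite ltnNge -region_lt ?tgt_range // -leqNgt lt_m.
have orth_u := max_orth_pair_orth (valP u).
case/orP: y_x => [/eqP eq_yx | exy].
  by move: (orth_pair_disj orth_u xXu); rewrite -eq_yx yYu.
by move: (orth_pair_noedge orth_u xXu yYu); rewrite exy.
Qed.

Lemma Tam_embeds_region m : embeds_in_Rd (@Tam_le alpha n) (n - nth 0 alpha m).
Proof.
set s := psum alpha m; set L := nth 0 alpha m.
have sL_le : s + L <= n by rewrite -psumS -sum_alpha psum_le.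
apply: (@embeds_in_Rd_nat _ _ _
  (fun u i => if i < s then start_count u i.+1 else end_count u (i + L).+1) (fun i => i < s)).
move=> u v; rewrite (Tam_le_counts m) psumS -/s -/L.
split=> [[le_start le_end] i | le_coord]; first have := ltn_ord i.
  by case: ifP => lt_is lt_i; rewrite lt_is; [apply: le_start | apply: le_end]; lia.
split=> c c_range.
  have lt_c : c.-1 < n - L by lia.
  have -> : c = c.-1.+1 by lia.
  by have := le_coord (Ordinal lt_c); rewrite /= (_ : c.-1 < s); last by lia.
have lt_c : c - L.+1 < n - L by lia.
have -> : c = (c - L.+1 + L).+1 by lia.
by have := le_coord (Ordinal lt_c); rewrite /= (_ : c - L.+1 < s = false); last by lia.
Qed.

Lemma matching_exists pre suf : alpha = pre ++ suf ->
  exists S A, [/\ matching_inv (reg) (sumn pre) n S A,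
                  size S + max_part suf = n - sumn pre & max_part suf <= size A].
Proof.
elim: suf pre => [|x suf IH] pre alphaE.
  exists [::], [::]; rewrite -sum_alpha alphaE cats0 subnn /max_part big_nil.
  by split=> //; split.
have [S [A [inv size_S size_A]]] := IH (rcons pre x) (etrans alphaE (esym (cat_rcons _ _ _))).
rewrite sumn_rcons in inv size_S.
have psum_pre : psum alpha (size pre) = sumn pre by rewrite /psum alphaE take_size_cat.
have psum_x : psum alpha (size pre).+1 = sumn pre + x.
  by rewrite psumS psum_pre alphaE nth_cat ltnn subnn.
have le_n : sumn pre + x <= n by rewrite -sum_alpha -psum_x psum_le.
have block_region a : sumn pre < a <= sumn pre + x -> reg a = size pre.
  by rewrite -psum_x -psum_pre; apply: region_psum.
have block_const a b : sumn pre < a <= sumn pre + x -> sumn pre < b <= sumn pre + x ->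
    reg a = reg b.
  by move=> /block_region -> /block_region ->.
have block_lt a b : sumn pre < a <= sumn pre + x -> sumn pre + x < b <= n ->
    reg a < reg b.
  by move=> /block_region ->; rewrite -psum_x -sum_alpha; apply: region_gt_psum.
have t_le_block : minn x (max_part suf) <= sumn pre + x - sumn pre by rewrite addKn geq_minl.
have t_le_A : minn x (max_part suf) <= size A by rewrite (leq_trans (geq_minr _ _)).
have := matching_step (leq_addr _ _) le_n t_le_block t_le_A block_const block_lt inv.
rewrite addKn => inv'; do 2 eexists; split; first exact: inv'.
  by rewrite size_cat size_map size_iota max_part_cons; lia.
by rewrite size_cat size_iota size_drop max_part_cons; lia.
Qed.

Lemma arc_of_pair a b : [&& 0 < a, a < b, b <= n & reg a != reg b] ->
  exists x : arc, src x = a /\ tgt x = b.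
Proof.
case/and4P => a_gt0 lt_ab le_bn ne_reg.
have lt_a : a < n.+1 by lia.
have lt_b : b < n.+1 by lia.
have arc_ab : is_arc alpha (Ordinal lt_a, Ordinal lt_b).
  by rewrite /is_arc /= a_gt0 lt_ab same_regionE ?ne_reg // sum_alpha; apply/andP; split; lia.
by exists (exist (@is_arc alpha n) _ arc_ab).
Qed.

Lemma Gedge_indep x y : indep_pair (reg) (src x, tgt x) (src y, tgt y) ->
  ~~ Gedge x y && ~~ Gedge y x.
Proof.
rewrite /indep_pair /= !GedgeE => /andP [lt_s].
case: (eqVneq (reg (src x)) (reg (src y))) => [eq_reg lt_t | ne_reg ind].
  by rewrite (leqNgt (tgt y)) lt_t (leqNgt (src y)) lt_s !andbF.
apply/andP; split; apply/negP => /andP [_].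
  by case/and4P => lt_ys; move: lt_s; rewrite ltnNge (ltnW lt_ys).
case/and4P => _ lt_ytx le_txty /negP; apply; rewrite eq_sym.
by move: ind; rewrite leqNgt lt_ytx ltnNge le_txty.
Qed.

Lemma Tam_dim_ge d : embeds_in_Rd (@Tam_le alpha n) d -> n - max_part alpha <= d.
Proof.
move=> emb.
have [S [A [[indep /allP valid _ _ _] size_S _]]] := matching_exists (esym (cat0s alpha)).
rewrite subn0 in size_S; rewrite -size_S addnK -[size S]card_ord.
have [xi xiE] := fin_all_exists
  (fun i : 'I_(size S) => arc_of_pair (valid _ (mem_nth (0, 0) (ltn_ord i)))).
have indep_xi (i j : 'I_(size S)) : i < j ->
    indep_pair (reg) (src (xi i), tgt (xi i)) (src (xi j), tgt (xi j)).
  case: (xiE i) (xiE j) => -> -> [-> ->]; rewrite -!surjective_pairing.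
  by apply: (pairwiseP (0, 0) indep); rewrite inE ltn_ord.
apply: (LG_indep_le_dim (x := xi) _ _ emb) => [i j eq_x | i j].
  apply: ord_inj; case: (ltngtP i j) => // lt_ij; have := indep_xi _ _ lt_ij;
    by rewrite eq_x /indep_pair ltnn.
case: (ltngtP i j) => [lt_ij | lt_ji | /ord_inj ->]; last by rewrite eqxx.
  by case/andP: (Gedge_indep (indep_xi _ _ lt_ij)).
by case/andP: (Gedge_indep (indep_xi _ _ lt_ji)).
Qed.

End ParabolicTamari.

Theorem proposition4p11 (n : nat) (alpha : seq nat) :
  0 < n -> all (fun a => 0 < a) alpha -> sumn alpha = n ->
  order_dimension_is (@Tam_le alpha n) (n - max_part alpha).
Proof.
move=> n_gt0 _ sum_alpha; split; last exact: Tam_dim_ge.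
have alpha_nil : alpha != [::] by apply: contraTneq n_gt0 => alpha0; rewrite -sum_alpha alpha0.
rewrite -(nth_index 0 (max_part_mem alpha_nil)).
exact: Tam_embeds_region.
Qed.
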